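(* (1) For any finite alphabet $\Sigma$ and any $\lambda\in[0,1]$, there is a quantum automaton $\mathcal{A}$ over $\Sigma$ such that $f^{\mathrm{D}}_{\mathcal{A}}(w)=\lambda$ for all $w\in\Sigma^\omega$. (2) Let $\mathcal{A}$ and $\mathcal{B}$ be quantum automata over the same alphabet $\Sigma$ and $a,b\in\mathbb{C}$ with $|a|^2+|b|^2=1$. Then for every $w\in\Sigma^\omega$, $f^{\mathrm{D}}_{a\mathcal{A}\oplus b\mathcal{B}}(w)\ge\max\{|a|^2f^{\mathrm{D}}_{\mathcal{A}}(w),|b|^2f^{\mathrm{D}}_{\mathcal{B}}(w)\}$.
   Context: A quantum automaton is a tuple $\mathcal{A}=(\mathcal{H},|s_0\rangle,\Sigma,\{U_\sigma:\sigma\in\Sigma\},F)$ where $\mathcal{H}$ is a finite-dimensional complex Hilbert space, $|s_0\rangle$ a unit vector, $\Sigma$ a finite alphabet, each $U_\sigma$ unitary, and $F$ a subspace. For $w=\sigma_1\sigma_2\cdots\in\Sigma^\omega$, a unit vector $|\psi\rangle\in F$ and checkpoints $0\le n_1<n_2<\cdots$, the disturbing run is $|s_0\rangle$ (initial state) and for $n\ge1$: $|s_n\rangle=U_{\sigma_n}|\psi\rangle$ if $n-1=n_i$ for some $i$, else $|s_n\rangle=U_{\sigma_n}|s_{n-1}\rangle$; $f^{\mathrm{D}}_{\mathcal{A}}(w)=\sup_{|\psi\rangle}\sup_{\{n_i\}}\inf_{i\ge1}|\langle\psi|s_{n_i}\rangle|^2$ over unit $|\psi\rangle\in F$ and strictly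 increasing checkpoint sequences. The weighted direct sum of $\mathcal{A}=(\mathcal{H}^{\mathcal{A}},|s_0^{\mathcal{A}}\rangle,\Sigma,\{U^{\mathcal{A}}_\sigma\},F^{\mathcal{A}})$ and $\mathcal{B}=(\mathcal{H}^{\mathcal{B}},|s_0^{\mathcal{B}}\rangle,\Sigma,\{U^{\mathcal{B}}_\sigma\},F^{\mathcal{B}})$ is $a\mathcal{A}\oplus b\mathcal{B}=(\mathcal{H}^{\mathcal{A}}\oplus\mathcal{H}^{\mathcal{B}},a|s_0^{\mathcal{A}}\rangle\oplus b|s_0^{\mathcal{B}}\rangle,\Sigma,\{U^{\mathcal{A}}_\sigma\oplus U^{\mathcal{B}}_\sigma\},F^{\mathcal{A}}\oplus F^{\mathcal{B}})$. *)

From HB Require Import structures.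
From mathcomp Require Import all_boot all_order all_algebra.
From mathcomp Require Import boolp classical_sets reals.
From mathcomp Require Import complex.
Set Implicit Arguments. Unset Strict Implicit. Unset Printing Implicit Defensive.
Import Order.TTheory GRing.Theory Num.Theory.
Local Open Scope ring_scope.
Local Open Scope classical_set_scope.

Section QA.
Variable R : realType.
Local Notation C := (R[i]).

Definition adjmx m n (M : 'M[C]_(m, n)) : 'M[C]_(n, m) := (map_mx conjc M)^T.

Definition cinner n (u v : 'cV[C]_n) : C := \sum_(j < n) conjc (u j 0) * v j 0.

Definition sqmod (z : C) : R := (complex.Re z) ^+ 2 + (complex.Im z) ^+ 2.

Definition unit_vec n (u : 'cV[C]_n) : Prop := cinner u u = 1.
Definition unitary n (U : 'M[C]_n) : Prop := adjmx U *m U = 1%:M.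

(* Raw data of a quantum automaton over alphabet Sigma, Hilbert space C^qa_dim
   (column vectors).  The subspace F is the row space of qa_F, i.e.
   psi \in F  iff  (psi^T <= qa_F)%MS. *)
Record qaut (Sigma : finType) := QAut {
  qa_dim : nat;
  qa_s0 : 'cV[C]_qa_dim;
  qa_U : Sigma -> 'M[C]_qa_dim;
  qa_F : 'M[C]_qa_dim }.

Definition in_F (Sigma : finType) (A : qaut Sigma) (psi : 'cV[C]_(qa_dim A)) : Prop :=
  (psi^T <= qa_F A)%MS.

Definition is_qaut (Sigma : finType) (A : qaut Sigma) : Prop :=
  unit_vec (qa_s0 A) /\ forall s, unitary (qa_U A s).

(* The disturbing run.  w : nat -> Sigma, with w k = sigma_{k+1};
   ns : nat -> nat, with ns i = n_{i+1}.  run k = |s_k>. *)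
Fixpoint drun (Sigma : finType) (A : qaut Sigma) (w : nat -> Sigma)
    (psi : 'cV[C]_(qa_dim A)) (ns : nat -> nat) (k : nat) : 'cV[C]_(qa_dim A) :=
  match k with
  | 0 => qa_s0 A
  | k'.+1 => qa_U A (w k') *m
      (if `[< exists i, ns i = k' >] then psi else drun w psi ns k')
  end.

Definition strictly_incr (ns : nat -> nat) : Prop := forall i, (ns i < ns i.+1)%N.

Definition dvalue (Sigma : finType) (A : qaut Sigma) (w : nat -> Sigma)
    (psi : 'cV[C]_(qa_dim A)) (ns : nat -> nat) : R :=
  inf (range (fun i => sqmod (cinner psi (drun w psi ns (ns i))))).

Definition fD (Sigma : finType) (A : qaut Sigma) (w : nat -> Sigma) : R :=
  sup [set x | exists (psi : 'cV[C]_(qa_dim A)) (ns : nat -> nat),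
        [/\ in_F psi, unit_vec psi, strictly_incr ns & x = dvalue w psi ns]].

Definition wsum (Sigma : finType) (a b : C) (A B : qaut Sigma) : qaut Sigma :=
  @QAut Sigma (qa_dim A + qa_dim B)
    (col_mx (a *: qa_s0 A) (b *: qa_s0 B))
    (fun s => block_mx (qa_U A s) 0 0 (qa_U B s))
    (block_mx (qa_F A) 0 0 (qa_F B)).

End QA.

From HB Require Import structures.
From mathcomp Require Import all_boot all_order all_algebra.
From mathcomp Require Import boolp classical_sets reals.
From mathcomp Require Import complex.
From mathcomp Require Import ring.
Import Order.TTheory GRing.Theory Num.Theory.

Local Open Scope ring_scope.
Local Open Scope classical_set_scope.
Local Open Scope complex_scope.

(* (1) On C^2 take all U_sigma = I, initial state (sqrt lam, sqrt (1 - lam)) and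
   F the line of e_1.  An admissible psi is a phase times e_1, and the run is s_0
   up to the first checkpoint and psi afterwards, so the overlaps are lam at the
   first checkpoint and 1 at all later ones: every admissible choice gives lam.
   (2) Any admissible psi for A gives the admissible state psi (+) 0 for
   aA (+) bB, with the same checkpoints.  The run of the sum is, blockwise, the
   runs of A and B started from a s_0^A and b s_0^B; scaling the initial state
   by a scales the run by a up to the first checkpoint and does not affect it
   afterwards, so each overlap is at least |a|^2 <= 1 times the one for A.
   Overlaps of unit vectors are at most 1, so all the suprema are finite. *)

(* [0 <= sup T] is needed for an empty [S], whose supremum is [0]. *)
Lemma ler_scale_sup (R : realType) (c : R) (S T : set R) :
  0 <= c -> 0 <= sup T -> has_ubound T ->
  (forall x, S x -> exists2 y, T y & c * x <= y) -> c * sup S <= sup T.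
Proof.
move=> c_ge0 supT_ge0 ubT ST.
have [->|c_neq0] := eqVneq c 0; first by rewrite mul0r.
have c_gt0 : 0 < c by rewrite lt_def c_neq0.
have [[x0 Sx0]|S0] := pselect (S !=set0); last first.
  by rewrite (_ : S = set0) ?sup0 ?mulr0 // -subset0 => x Sx; apply: S0; exists x.
rewrite mulrC -ler_pdivlMr //; apply: ge_sup; first by exists x0.
move=> x /ST [y Ty cxy]; rewrite ler_pdivlMr // mulrC.
exact: le_trans cxy (ub_le_sup ubT Ty).
Qed.

Section QuantumAutomata.
Variable R : realType.
Local Notation C := R[i].

Lemma sqmodE (z : C) : (sqmod z)%:C = `|z| ^+ 2.
Proof. exact: add_Re2_Im2. Qed.

Lemma sqmod_ge0 (z : C) : 0 <= sqmod z.
Proof. by rewrite /sqmod addr_ge0 ?sqr_ge0. Qed.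

Lemma sqmodM (x y : C) : sqmod (x * y) = sqmod x * sqmod y.
Proof. by case: x => a b; case: y => c d; rewrite /sqmod /=; ring. Qed.

Lemma sqmodJ (z : C) : sqmod (z^*) = sqmod z.
Proof. by case: z => a b; rewrite /sqmod /= sqrrN. Qed.

Lemma sqmod_real (x : R) : sqmod x%:C = x ^+ 2.
Proof. by rewrite /sqmod /= expr0n addr0. Qed.

Lemma mulJc (z : C) : z^* * z = (sqmod z)%:C.
Proof. by rewrite sqmodE normCKC. Qed.

Lemma cinnerE n (u v : 'cV[C]_n) : cinner u v = (adjmx u *m v) 0 0.
Proof. by rewrite /cinner /adjmx mxE; apply: eq_bigr => j _; rewrite !mxE. Qed.

Lemma cinnerZl n (u v : 'cV[C]_n) a : cinner (a *: u) v = a^* * cinner u v.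
Proof. by rewrite /cinner mulr_sumr; apply: eq_bigr => j _; rewrite mxE rmorphM mulrA. Qed.

Lemma cinnerZr n (u v : 'cV[C]_n) a : cinner u (a *: v) = a * cinner u v.
Proof. by rewrite /cinner mulr_sumr; apply: eq_bigr => j _; rewrite mxE mulrCA. Qed.

Lemma cinner0l n (v : 'cV[C]_n) : cinner 0 v = 0.
Proof. by rewrite /cinner big1 // => j _; rewrite mxE rmorph0 mul0r. Qed.

Lemma cinner_col_mx m1 m2 (u1 v1 : 'cV[C]_m1) (u2 v2 : 'cV[C]_m2) :
  cinner (col_mx u1 u2) (col_mx v1 v2) = cinner u1 v1 + cinner u2 v2.
Proof.
rewrite /cinner big_split_ord; congr (_ + _); apply: eq_bigr => i _.
  by rewrite !col_mxEu.
by rewrite !col_mxEd.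
Qed.

Lemma cinner_unitary n (U : 'M[C]_n) u v :
  unitary U -> cinner (U *m u) (U *m v) = cinner u v.
Proof.
by move=> UU; rewrite !cinnerE /adjmx map_mxM trmx_mul -mulmxA (mulmxA _ U) UU mul1mx.
Qed.

Lemma cinner_self n (u : 'cV[C]_n) : cinner u u = \sum_j `|u j 0| ^+ 2.
Proof. by apply: eq_bigr => j _; rewrite normCKC. Qed.

Lemma sqmod_cinner_le1 n (u v : 'cV[C]_n) :
  unit_vec u -> unit_vec v -> sqmod (cinner u v) <= 1.
Proof.
move=> u1 v1.
have norm_le1 : `|cinner u v| <= 1.
  apply: le_trans (ler_norm_sum _ _ _) _.
  have -> : 1 = \sum_j (`|u j 0| ^+ 2 + `|v j 0| ^+ 2) / 2 :> C.
    by rewrite -mulr_suml big_split /= -!cinner_self u1 v1 divff // -mulr2n pnatr_eq0.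
  apply: ler_sum => j _; rewrite normrM norm_conjC.
  exact: real_leif_mean_square (normr_real _) (normr_real _).
have := exprn_ile1 2 (normr_ge0 _) norm_le1.
by rewrite -sqmodE -[1 : C]/(1%:C) lecR.
Qed.

Lemma unitary1 n : unitary (1%:M : 'M[C]_n).
Proof. by rewrite /unitary /adjmx map_scalar_mx rmorph1 tr_scalar_mx mul1mx. Qed.

Lemma unitary_block m n (U : 'M[C]_m) (V : 'M[C]_n) :
  unitary U -> unitary V -> unitary (block_mx U 0 0 V).
Proof.
rewrite /unitary /adjmx => UU VV.
rewrite map_block_mx tr_block_mx !map_mx0 !trmx0 mulmx_block.
by rewrite !mulmx0 !mul0mx !addr0 !add0r UU VV scalar_mx_block.
Qed.

Section Runs.
Context {Sigma : finType} {A : qaut R Sigma}.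
Variables (w : nat -> Sigma) (psi : 'cV[C]_(qa_dim A)) (ns : nat -> nat).

Lemma drun_unit_vec k : is_qaut A -> unit_vec psi -> unit_vec (drun w psi ns k).
Proof.
case=> s0_unit U_unitary psi_unit; elim: k => [|k IH] //=.
by rewrite /unit_vec cinner_unitary //; case: ifP.
Qed.

Lemma drunS_checkpoint i : drun w psi ns (ns i).+1 = qa_U A (w (ns i)) *m psi.
Proof. by rewrite /= asboolT //; exists i. Qed.

Lemma dvalue_le i : dvalue w psi ns <= sqmod (cinner psi (drun w psi ns (ns i))).
Proof. by apply: ge_inf; [exists 0 => _ [j _ <-]; apply: sqmod_ge0 | exists i]. Qed.

Lemma dvalue_ge0 : 0 <= dvalue w psi ns.
Proof.
by apply: lb_le_inf; [eexists; exists 0 | move=> _ [i _ <-]; apply: sqmod_ge0].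
Qed.

Lemma dvalue_le1 : is_qaut A -> unit_vec psi -> dvalue w psi ns <= 1.
Proof.
move=> qA psi_unit; apply: le_trans (dvalue_le 0) _.
by apply: sqmod_cinner_le1 => //; apply: drun_unit_vec.
Qed.

Hypothesis ns_incr : strictly_incr ns.

Lemma first_checkpoint_le i : (ns 0 <= ns i)%N.
Proof. exact: (homo_leq leqnn leq_trans (fun j => ltnW (ns_incr j))). Qed.

Lemma drunS_before k :
  (k < ns 0)%N -> drun w psi ns k.+1 = qa_U A (w k) *m drun w psi ns k.
Proof.
move=> k_lt; rewrite /= asboolF // => -[i ki].
by move: k_lt; rewrite -ki ltnNge first_checkpoint_le.
Qed.

Lemma drun_id_dynamics k :
  (forall s, qa_U A s = 1%:M) -> drun w psi ns k = if (k <= ns 0)%N then qa_s0 A else psi.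
Proof.
move=> U1; elim: k => [|k IH] //.
case: (ltngtP k (ns 0)) => [k_lt|k_gt|->].
- by rewrite drunS_before // U1 mul1mx IH ltnW.
- by rewrite /= U1 mul1mx IH leqNgt k_gt; case: ifP.
- by rewrite drunS_checkpoint U1 mul1mx.
Qed.

End Runs.

Definition qa_with_s0 {Sigma : finType} (A : qaut R Sigma) (s : 'cV[C]_(qa_dim A)) :=
  @QAut R Sigma (qa_dim A) s (qa_U A) (qa_F A).

Lemma drun_scale_s0 (Sigma : finType) (A : qaut R Sigma) (w : nat -> Sigma)
    (psi : 'cV[C]_(qa_dim A)) (ns : nat -> nat) (c : C) k :
  strictly_incr ns ->
  drun (A := qa_with_s0 A (c *: qa_s0 A)) w psi ns k =
  if (k <= ns 0)%N then c *: drun w psi ns k else drun w psi ns k.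
Proof.
move=> ns_incr; elim: k => [|k IH] //.
case: (ltngtP k (ns 0)) => [k_lt|k_gt|->].
- by rewrite !drunS_before // IH ltnW // scalemxAr.
- by rewrite /= IH leqNgt k_gt.
- by rewrite !drunS_checkpoint.
Qed.

Lemma dvalue_scale_s0 (Sigma : finType) (A : qaut R Sigma) (w : nat -> Sigma)
    (psi : 'cV[C]_(qa_dim A)) (ns : nat -> nat) (c : C) :
  strictly_incr ns -> sqmod c <= 1 ->
  sqmod c * dvalue w psi ns <= dvalue (A := qa_with_s0 A (c *: qa_s0 A)) w psi ns.
Proof.
move=> ns_incr c_le1; apply: lb_le_inf; first by eexists; exists 0.
move=> _ [i _ <-]; apply: le_trans (ler_wpM2l (sqmod_ge0 c) (dvalue_le w psi ns i)) _.
rewrite drun_scale_s0 //; case: ifP => _; first by rewrite cinnerZr sqmodM.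
by rewrite ler_piMl ?sqmod_ge0.
Qed.

Lemma in_F0 {Sigma : finType} (A : qaut R Sigma) : in_F (0 : 'cV[C]_(qa_dim A)).
Proof. by rewrite /in_F trmx0 sub0mx. Qed.

Definition dvalues {Sigma : finType} (A : qaut R Sigma) (w : nat -> Sigma) :=
  [set x | exists (psi : 'cV[C]_(qa_dim A)) (ns : nat -> nat),
        [/\ in_F psi, unit_vec psi, strictly_incr ns & x = dvalue w psi ns]].

Lemma fD_ge0 (Sigma : finType) (A : qaut R Sigma) (w : nat -> Sigma) : 0 <= fD A w.
Proof.
rewrite /fD -/(dvalues A w).
have [[[x dx] ub]|/sup_out-> //] := pselect (has_sup (dvalues A w)).
apply: le_trans (ub_le_sup ub dx).
by case: dx => psi [ns [_ _ _ ->]]; apply: dvalue_ge0.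
Qed.

Lemma has_ubound_dvalues (Sigma : finType) (A : qaut R Sigma) (w : nat -> Sigma) :
  is_qaut A -> has_ubound (dvalues A w).
Proof. by move=> qA; exists 1 => _ [psi [ns [_ psi_unit _ ->]]]; apply: dvalue_le1. Qed.

Lemma cinner2 (u v : 'cV[C]_2) :
  cinner u v = (u 0 0)^* * v 0 0 + (u ord_max 0)^* * v ord_max 0.
Proof.
by rewrite /cinner big_ord_recr big_ord1 (_ : widen_ord _ ord0 = 0) //; apply: val_inj.
Qed.

Definition const_s0 (lam : R) : 'cV[C]_2 :=
  \col_i (if i == 0 then (Num.sqrt lam)%:C else (Num.sqrt (1 - lam))%:C).

Definition const_qaut (Sigma : finType) (lam : R) : qaut R Sigma :=
  @QAut R Sigma 2 (const_s0 lam) (fun=> 1%:M) (delta_mx 0 0).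

Section ConstantAutomaton.
Variables (Sigma : finType) (lam : R).
Hypothesis lam01 : 0 <= lam <= 1.
Local Notation A := (const_qaut Sigma lam).

Lemma is_qaut_const : is_qaut A.
Proof.
case/andP: lam01 => lam_ge0 lam_le1; split => [|s]; last exact: unitary1.
rewrite /unit_vec cinner2 !mxE /= !mulJc !sqmod_real !sqr_sqrtr ?subr_ge0 //.
by rewrite -rmorphD addrC subrK.
Qed.

Lemma in_F_const (psi : 'cV[C]_2) : in_F (A := A) psi -> psi ord_max 0 = 0.
Proof.
case/submxP => D /(congr1 (fun M : 'rV[C]_2 => M 0 ord_max)).
rewrite !mxE => ->; rewrite big1 // => k _.
by rewrite mxE andbF mulr0.
Qed.

Lemma dvalue_const (w : nat -> Sigma) (psi : 'cV[C]_2) (ns : nat -> nat) :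
  in_F (A := A) psi -> unit_vec psi -> strictly_incr ns -> dvalue (A := A) w psi ns = lam.
Proof.
move=> /in_F_const psi1_eq0 psi_unit ns_incr.
have psi0_unit : sqmod (psi 0 0) = 1.
  move: psi_unit; rewrite /unit_vec cinner2 psi1_eq0 mulr0 addr0 mulJc.
  by move/(congr1 (@complex.Re R)).
have [lam_ge0 _] := andP lam01.
have at_first : sqmod (cinner psi (drun (A := A) w psi ns (ns 0))) = lam.
  rewrite drun_id_dynamics // leqnn cinner2 psi1_eq0 rmorph0 mul0r addr0.
  by rewrite sqmodM sqmodJ psi0_unit mul1r mxE sqmod_real sqr_sqrtr.
have after_first i : (0 < i)%N -> sqmod (cinner psi (drun (A := A) w psi ns (ns i))) = 1.
  move=> i_gt0; rewrite drun_id_dynamics // leqNgt (homo_ltn ltn_trans ns_incr i_gt0).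
  by rewrite psi_unit sqmod_real expr1n.
apply/le_anti/andP; split; first by rewrite -[X in _ <= X]at_first dvalue_le.
apply: lb_le_inf; first by eexists; exists 0.
move=> _ [[|i] _ <-]; first by rewrite at_first.
by rewrite after_first //; case/andP: lam01.
Qed.

Lemma fD_const (w : nat -> Sigma) : fD A w = lam.
Proof.
rewrite /fD -/(dvalues A w) -[X in _ = X]sup1; congr sup.
apply/seteqP; split => [_ [psi [ns [psiF psi_unit ns_incr ->]]]|_ ->].
  exact: dvalue_const.
have e0F : in_F (A := A) (delta_mx 0 0).
  rewrite /in_F trmx_delta /= -(mul_delta_mx (0 : 'I_2) (0 : 'I_1)).
  exact: submxMl.
have e0_unit : unit_vec (delta_mx 0 0 : 'cV[C]_2).
  by rewrite /unit_vec cinner2 !mxE /= mulr0 addr0 rmorph1 mulr1.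
have id_incr : strictly_incr id by [].
by exists (delta_mx 0 0), id; rewrite dvalue_const.
Qed.

End ConstantAutomaton.

Section WeightedSum.
Variables (Sigma : finType) (A B : qaut R Sigma) (a b : C).
Local Notation AB := (wsum a b A B).

Lemma is_qaut_wsum :
  is_qaut A -> is_qaut B -> sqmod a + sqmod b = 1 -> is_qaut AB.
Proof.
case=> s0A_unit UA_unitary [s0B_unit UB_unitary] ab1; split => [|s].
  rewrite /unit_vec cinner_col_mx !cinnerZl !cinnerZr s0A_unit s0B_unit !mulr1.
  by rewrite !mulJc -rmorphD ab1.
exact: unitary_block.
Qed.

Lemma in_F_wsum {psiA : 'cV[C]_(qa_dim A)} {psiB : 'cV[C]_(qa_dim B)} :
  in_F psiA -> in_F psiB -> in_F (A := AB) (col_mx psiA psiB).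
Proof.
case/submxP => DA psiAE /submxP [DB psiBE].
rewrite /in_F /= tr_col_mx psiAE psiBE.
rewrite (_ : row_mx _ _ = row_mx DA DB *m block_mx (qa_F A) 0 0 (qa_F B)) ?submxMl //.
by rewrite mul_row_block !mulmx0 addr0 add0r.
Qed.

Lemma drun_wsum w (psiA : 'cV[C]_(qa_dim A)) (psiB : 'cV[C]_(qa_dim B)) ns k :
  drun (A := AB) w (col_mx psiA psiB) ns k =
  col_mx (drun (A := qa_with_s0 A (a *: qa_s0 A)) w psiA ns k)
         (drun (A := qa_with_s0 B (b *: qa_s0 B)) w psiB ns k).
Proof.
elim: k => [|k IH] //=; rewrite IH.
by case: ifP => _; rewrite mul_block_col !mul0mx addr0 add0r.
Qed.

Lemma dvalue_wsum_l w (psi : 'cV[C]_(qa_dim A)) ns :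
  dvalue (A := AB) w (col_mx psi 0) ns =
  dvalue (A := qa_with_s0 A (a *: qa_s0 A)) w psi ns.
Proof.
rewrite /dvalue; congr (inf [set _ | _ in _]); apply/funext => i.
by rewrite drun_wsum cinner_col_mx cinner0l addr0.
Qed.

Lemma dvalue_wsum_r w (psi : 'cV[C]_(qa_dim B)) ns :
  dvalue (A := AB) w (col_mx 0 psi) ns =
  dvalue (A := qa_with_s0 B (b *: qa_s0 B)) w psi ns.
Proof.
rewrite /dvalue; congr (inf [set _ | _ in _]); apply/funext => i.
by rewrite drun_wsum cinner_col_mx cinner0l add0r.
Qed.

Hypotheses (qA : is_qaut A) (qB : is_qaut B) (ab1 : sqmod a + sqmod b = 1).

Lemma fD_wsum_l w : sqmod a * fD A w <= fD AB w.
Proof.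
apply: ler_scale_sup; [exact: sqmod_ge0 | exact: fD_ge0 |
  exact: has_ubound_dvalues (is_qaut_wsum qA qB ab1) |].
move=> _ [psi [ns [psiF psi_unit ns_incr ->]]].
exists (dvalue (A := AB) w (col_mx psi 0) ns).
  exists (col_mx psi 0), ns; split => //; first exact: in_F_wsum psiF (in_F0 B).
  by rewrite /unit_vec cinner_col_mx cinner0l addr0.
rewrite dvalue_wsum_l dvalue_scale_s0 //.
by rewrite -ab1 lerDl sqmod_ge0.
Qed.

Lemma fD_wsum_r w : sqmod b * fD B w <= fD AB w.
Proof.
apply: ler_scale_sup; [exact: sqmod_ge0 | exact: fD_ge0 |
  exact: has_ubound_dvalues (is_qaut_wsum qA qB ab1) |].
move=> _ [psi [ns [psiF psi_unit ns_incr ->]]].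
exists (dvalue (A := AB) w (col_mx 0 psi) ns).
  exists (col_mx 0 psi), ns; split => //; first exact: in_F_wsum (in_F0 A) psiF.
  by rewrite /unit_vec cinner_col_mx cinner0l add0r.
rewrite dvalue_wsum_r dvalue_scale_s0 //.
by rewrite -ab1 lerDr sqmod_ge0.
Qed.

End WeightedSum.

End QuantumAutomata.

Theorem proposition5 (R : realType) :
  (forall (Sigma : finType) (lam : R), 0 <= lam <= 1 ->
     exists A : qaut R Sigma, is_qaut A /\ forall w : nat -> Sigma, fD A w = lam)
  /\
  (forall (Sigma : finType) (A B : qaut R Sigma) (a b : R[i]),
     is_qaut A -> is_qaut B -> sqmod a + sqmod b = 1 ->
     forall w : nat -> Sigma,
       Num.max (sqmod a * fD A w) (sqmod b * fD B w) <= fD (wsum a b A B) w).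
Proof.
split=> [Sigma lam lam01 | Sigma A B a b qA qB ab1 w].
  by exists (const_qaut R Sigma lam); split=> [|w]; [apply: is_qaut_const | apply: fD_const].
by rewrite ge_max fD_wsum_l ?fD_wsum_r.
Qed.
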